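(* There is a constant $c_1>0$ such that for all $n>5$, $$h_3(n,\{(4,0),(4,3)\}) > c_1\, n^{1/3}.$$ That is, every $n$-vertex $3$-graph in which every four vertices span $1$, $2$ or $4$ edges has a clique or coclique of size greater than $c_1 n^{1/3}$.
   Context: For an $r$-uniform hypergraph ($r$-graph) $H$, a homogeneous set is a set of vertices that is either a clique (every $r$-subset is an edge) or a coclique (no $r$-subset is an edge); $h(H)$ denotes the size of a largest homogeneous set. An $(m,f)$-graph is an $r$-graph with $m$ vertices and $f$ edges; $H$ is $(m,f)$-free if it contains no induced sub-hypergraph that is an $(m,f)$-graph. For a set $Q$ of pairs $(m,f)$, $H$ is $Q$-free if it is $(m,f)$-free for every $(m,f)\in Q$. $h_r(n,Q)$ is the minimum of $h(H)$ over all $n$-vertex $Q$-free $r$-graphs $H$. *)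

From mathcomp Require Import all_boot.
From Stdlib Require Import Reals.
Set Implicit Arguments. Unset Strict Implicit. Unset Printing Implicit Defensive.

Definition uniform (n r : nat) (E : {set {set 'I_n}}) : Prop :=
  forall e, e \in E -> #|e| = r.

Definition induced_edges (n : nat) (E : {set {set 'I_n}}) (S : {set 'I_n}) : nat :=
  #|[set e in E | e \subset S]|.

Definition mf_free (n : nat) (E : {set {set 'I_n}}) (m f : nat) : Prop :=
  forall S : {set 'I_n}, #|S| = m -> induced_edges E S <> f.

Definition Q_free (n : nat) (E : {set {set 'I_n}}) (Q : seq (nat * nat)) : Prop :=
  forall p, p \in Q -> mf_free E p.1 p.2.

Definition clique (n r : nat) (E : {set {set 'I_n}}) (S : {set 'I_n}) : Prop :=
  forall e : {set 'I_n}, e \subset S -> #|e| = r -> e \in E.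

Definition coclique (n r : nat) (E : {set {set 'I_n}}) (S : {set 'I_n}) : Prop :=
  forall e : {set 'I_n}, e \subset S -> #|e| = r -> e \notin E.

Definition homogeneous (n r : nat) (E : {set {set 'I_n}}) (S : {set 'I_n}) : Prop :=
  clique r E S \/ coclique r E S.

From mathcomp Require Import all_boot.
From Stdlib Require Import Reals Lra.
(* Reals rebinds [^] on [nat] to [Nat.pow]; restore [expn]. *)
Import ssrnat.

(* Fix a vertex v and join x, y in the link graph of v when {v, x, y} is an edge.
   The two forbidden configurations on four vertices say that triangles and
   anti-triangles of the link span hyperedges while induced paths a-b-c do not;
   hence the link has no induced 4-cycle, and its cliques and stable sets are
   cliques of the hypergraph. In a graph without induced 4-cycle a maximum stable
   set K dominates all other vertices, and these fall into at most |K|^2 cells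
   (common neighbours of i <> j in K, or vertices whose only neighbour in K is i),
   each of them complete. So n <= 1 + M + M^3 for the clique number M, whence
   M > n^(1/3) / 2. *)

Set Implicit Arguments.
Unset Strict Implicit.
Unset Printing Implicit Defensive.

Ltac solve_uniq u :=
  move: u; rewrite /= ?inE ?negb_or ?andbT => u;
  rewrite /= ?inE ?negb_or ?andbT -?andbA;
  repeat (apply/andP; split);
  let e := fresh in apply/eqP => e; by move: u; rewrite e eqxx /= ?andbF.

Section SmallSets.
Variable T : finType.

Lemma card3_set3 (e : {set T}) : #|e| = 3 ->
  exists a b c, uniq [:: a; b; c] /\ e = [set a; b; c].
Proof.
move=> e3; have /set0Pn [a ae] : e != set0 by rewrite -card_gt0 e3.
have /cards2P [b [c [bc ea]]] : #|e :\ a| == 2.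
  by move: e3; rewrite (cardsD1 a) ae add1n => -[->].
have : (b \in e :\ a) && (c \in e :\ a) by rewrite ea !inE !eqxx orbT.
rewrite !inE => /andP[/andP[ba _] /andP[ca _]].
exists a, b, c; split; first by rewrite /= !inE !negb_or ![a == _]eq_sym ba ca bc.
by rewrite -(setD1K ae) ea setUA.
Qed.

Lemma card_set4 (a b c d : T) : uniq [:: a; b; c; d] -> #|[set a; b; c; d]| = 4.
Proof.
move=> u; rewrite -[4]/(size [:: a; b; c; d]) -(card_uniqP u); apply: eq_card => x.
by rewrite !inE -!orbA.
Qed.

Lemma set4D1 (a b c d : T) : uniq [:: a; b; c; d] ->
  [/\ [set a; b; c; d] :\ a = [set b; c; d], [set a; b; c; d] :\ b = [set a; c; d],
      [set a; b; c; d] :\ c = [set a; b; d] & [set a; b; c; d] :\ d = [set a; b; c]].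
Proof.
rewrite /= !inE !negb_or -!andbA => /and5P[ab ac ad bc /and3P[bd cd _]].
by split; apply/setP => z; rewrite !inE;
  case: (z =P a) => [->|_]; try case: (z =P b) => [->|_]; try case: (z =P c) => [->|_];
  rewrite ?eqxx ?(negbTE ab) ?(negbTE ac) ?(negbTE ad) ?(negbTE bc) ?(negbTE bd)
          ?(negbTE cd) /= ?andNb.
Qed.

Lemma leq_card_bigcup (I : finType) (P : {pred I}) (F : I -> {set T}) :
  #|\bigcup_(i in P) F i| <= \sum_(i in P) #|F i|.
Proof.
apply: (big_ind2 (fun (X : {set T}) k => #|X| <= k)) => // [|X1 k1 X2 k2 le1 le2].
  by rewrite cards0.
apply: leq_trans (leq_add le1 le2).
by rewrite cardsU leq_subr.
Qed.

End SmallSets.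

Section InducedEdges.
Variables (n : nat) (E : {set {set 'I_n}}).
Hypothesis E3 : uniform 3 E.

Lemma induced_edges_card4 (S : {set 'I_n}) : #|S| = 4 ->
  induced_edges E S = \sum_(x in S) (S :\ x \in E).
Proof.
move=> S4; rewrite /induced_edges.
have -> : [set e in E | e \subset S] = [set S :\ x | x in [set x in S | S :\ x \in E]].
  apply/setP => e; rewrite inE; apply/andP/imsetP => [[eE eS]|[x]].
    have /cards1P [x Sx] : #|S :\: e| == 1.
      by rewrite cardsD (setIidPr eS) S4 E3.
    have : x \in S :\: e by rewrite Sx set11.
    rewrite inE => /andP[_ xS].
    have ee : S :\ x = e by rewrite -Sx setDDr setDv set0U (setIidPr eS).
    by exists x; rewrite // inE xS ee eE.
  by rewrite inE => /andP[_ xE] ->; rewrite xE subD1set.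
rewrite card_in_imset => [|x y]; last first.
  rewrite !inE => /andP[xS _] /andP[yS _] Sxy; apply/eqP; apply: contraT => xy.
  have : x \in S :\ y by rewrite !inE xy xS.
  by rewrite -Sxy !inE eqxx.
rewrite -sum1_card (eq_bigl (fun x => (x \in S) && (S :\ x \in E))) => [|x]; last by rewrite inE.
by rewrite big_mkcondr; apply: eq_bigr => x _; case: (S :\ x \in E).
Qed.

Definition edge3 (a b c : 'I_n) := [set a; b; c] \in E.

Lemma edge3C a b c : edge3 a b c = edge3 b a c.
Proof. by rewrite /edge3 (setUC [set a]). Qed.

Lemma edge3AC a b c : edge3 a b c = edge3 a c b.
Proof. by rewrite /edge3 setUAC. Qed.

Lemma induced_edges_set4 a b c d : uniq [:: a; b; c; d] ->
  induced_edges E [set a; b; c; d] = edge3 b c d + edge3 a c d + edge3 a b d + edge3 a b c.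
Proof.
move=> u; rewrite induced_edges_card4 ?card_set4 //.
rewrite (eq_bigl (mem [:: a; b; c; d])) => [|x]; last by rewrite !inE -!orbA.
rewrite -big_uniq // !big_cons big_nil /= addn0 !addnA.
by have [-> -> -> ->] := set4D1 u.
Qed.

End InducedEdges.

Section LinkGraph.
Variables (n : nat) (E : {set {set 'I_n}}).
Hypothesis E3 : uniform 3 E.
Hypothesis no40 : mf_free E 4 0.
Hypothesis no43 : mf_free E 4 3.

Local Notation edge3 := (edge3 E).

Lemma set4_has_edge a b c d : uniq [:: a; b; c; d] ->
  [|| edge3 b c d, edge3 a c d, edge3 a b d | edge3 a b c].
Proof.
move=> u; have := no40 (card_set4 u); rewrite induced_edges_set4 //.
by case: (edge3 b c d); case: (edge3 a c d); case: (edge3 a b d); case: (edge3 a b c).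
Qed.

Lemma set4_fourth_edge a b c d : uniq [:: a; b; c; d] ->
  edge3 a c d -> edge3 a b d -> edge3 a b c -> edge3 b c d.
Proof.
move=> u acd abd abc; have := no43 (card_set4 u); rewrite induced_edges_set4 // acd abd abc.
by case: (edge3 b c d).
Qed.

Variable v : 'I_n.

Definition link x y := edge3 v x y.

Lemma linkC : symmetric link.
Proof. by move=> x y; rewrite /link edge3AC. Qed.

Lemma link_triangle_edge a b c : uniq [:: v; a; b; c] ->
  link a b -> link a c -> link b c -> edge3 a b c.
Proof. by move=> u ab ac bc; apply: set4_fourth_edge u bc ac ab. Qed.

Lemma link_coclique_edge a b c : uniq [:: v; a; b; c] ->
  ~~ link a b -> ~~ link a c -> ~~ link b c -> edge3 a b c.
Proof.
move=> u ab ac bc; have := set4_has_edge u.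
by rewrite -/(link b c) -/(link a c) -/(link a b) (negbTE ab) (negbTE ac) (negbTE bc) !orbF.
Qed.

Lemma link_path_nonedge a b c : uniq [:: v; a; b; c] ->
  link a b -> link b c -> ~~ link a c -> ~~ edge3 a b c.
Proof.
move=> u ab bc; apply: contraNN => abc.
have u' : uniq [:: b; v; a; c] by solve_uniq u.
by apply: (set4_fourth_edge u'); rewrite edge3C // edge3AC.
Qed.

Lemma link_C4free a b c d : uniq [:: v; a; b; c; d] ->
  link a b -> link b c -> link c d -> link d a -> link a c || link b d.
Proof.
move=> u ab bc cd da; apply: contraT; rewrite negb_or => /andP[ac bd].
have nabc : ~~ edge3 a b c by apply: link_path_nonedge; first solve_uniq u.
have nbcd : ~~ edge3 b c d by apply: link_path_nonedge; first solve_uniq u.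
have ncda : ~~ edge3 c d a.
  by apply: link_path_nonedge => //; [solve_uniq u | rewrite linkC].
have ndab : ~~ edge3 d a b.
  by apply: link_path_nonedge => //; [solve_uniq u | rewrite linkC].
have u4 : uniq [:: a; b; c; d] by solve_uniq u.
move: (set4_has_edge u4); rewrite (negbTE nabc) (negbTE nbcd) orbF.
by rewrite [edge3 a c d]edge3C edge3AC (negbTE ncda) [edge3 a b d]edge3AC edge3C (negbTE ndab).
Qed.

End LinkGraph.

Lemma clique_of_edge3 n (E : {set {set 'I_n}}) (S : {set 'I_n}) :
  (forall a b c, a \in S -> b \in S -> c \in S -> uniq [:: a; b; c] -> edge3 E a b c) ->
  clique 3 E S.
Proof.
move=> tri e eS /card3_set3 [a [b [c [u ee]]]]; subst e.
have inS x : x \in [set a; b; c] -> x \in S by apply: (subsetP eS).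
by apply: tri u; apply: inS; rewrite !inE eqxx ?orbT.
Qed.

Section LinkCliques.
Variables (n : nat) (E : {set {set 'I_n}}).
Hypothesis E3 : uniform 3 E.
Hypothesis no40 : mf_free E 4 0.
Hypothesis no43 : mf_free E 4 3.
Variables (v : 'I_n) (S : {set 'I_n}).
Hypothesis vS : v \notin S.

Local Notation link := (link E v).

Lemma uniq_link_triple a b c : a \in S -> b \in S -> c \in S -> uniq [:: a; b; c] ->
  uniq [:: v; a; b; c].
Proof.
move=> aS bS cS u; have vN x : x \in S -> (v == x) = false.
  by move=> xS; apply/negbTE; apply: contraNneq vS => ->.
by rewrite cons_uniq u andbT !inE !vN.
Qed.

Lemma link_stable_clique : {in S &, forall x y, x != y -> ~~ link x y} -> clique 3 E S.
Proof.
move=> st; apply: clique_of_edge3 => a b c aS bS cS u.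
have u' := uniq_link_triple aS bS cS u.
move: u; rewrite /= !inE !negb_or andbT => /andP[/andP[ab ac] bc].
by apply: (link_coclique_edge E3 no40 u'); apply: st.
Qed.

Lemma link_complete_clique : {in S &, forall x y, x != y -> link x y} -> clique 3 E S.
Proof.
move=> cp; apply: clique_of_edge3 => a b c aS bS cS u.
have u' := uniq_link_triple aS bS cS u.
move: u; rewrite /= !inE !negb_or andbT => /andP[/andP[ab ac] bc].
by apply: (link_triangle_edge E3 no43 u'); apply: cp.
Qed.

End LinkCliques.

Section C4FreeGraph.
Variables (T : finType) (adj : rel T) (A : {set T}).
Hypothesis adjC : symmetric adj.
Hypothesis C4free : forall a b c d, a \in A -> b \in A -> c \in A -> d \in A ->
  uniq [:: a; b; c; d] -> adj a b -> adj b c -> adj c d -> adj d a -> adj a c || adj b d.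

Definition stable_set (S : {set T}) :=
  (S \subset A) && [forall x in S, forall y in S, (x != y) ==> ~~ adj x y].

Lemma stable_setP (S : {set T}) :
  reflect (S \subset A /\ {in S &, forall x y, x != y -> ~~ adj x y}) (stable_set S).
Proof.
apply: (iffP andP) => -[SA st]; split=> //.
  by move=> x y xS yS; move/forall_inP/(_ x xS)/forall_inP/(_ y yS)/implyP: st.
by apply/forall_inP => x xS; apply/forall_inP => y yS; apply/implyP; apply: st.
Qed.

Lemma stable_setS (S S' : {set T}) : S' \subset S -> stable_set S -> stable_set S'.
Proof.
move=> S'S /stable_setP[SA st]; apply/stable_setP; split; first exact: subset_trans SA.
by move=> x y /(subsetP S'S) xS /(subsetP S'S); apply: st.
Qed.

Lemma stable_setU1 (S : {set T}) z :
  stable_set S -> z \in A -> (forall k, k \in S -> ~~ adj z k) -> stable_set (z |: S).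
Proof.
move=> /stable_setP[SA st] zA zS; apply/stable_setP; split.
  by rewrite subUset sub1set zA.
move=> x y /setU1P[->|xS] /setU1P[->|yS]; rewrite ?eqxx // => xy.
- exact: zS.
- by rewrite adjC; apply: zS.
- exact: st.
Qed.

Section MaximumStableSet.
Variable K : {set T}.
Hypothesis K_stable : stable_set K.
Hypothesis K_max : forall S, stable_set S -> #|S| <= #|K|.

Definition cell i j := [set x in A :\: K |
  [&& adj x i, adj x j & (i == j) ==> [forall k in K, adj x k ==> (k == i)]]].

Lemma cell_subset i j : cell i j \subset A.
Proof. by apply/subsetP => x; rewrite !inE => /andP[/andP[]]. Qed.

Lemma cells_cover : A \subset K :|: \bigcup_(p in setX K K) cell p.1 p.2.
Proof.
apply/subsetP => x xA; rewrite inE; case xK: (x \in K) => //=.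
have [i iK xi] : exists2 i, i \in K & adj x i.
  apply/exists_inP; apply: contraT; rewrite negb_exists_in => /forall_inP xK'.
  have := K_max (stable_setU1 K_stable xA xK').
  by rewrite cardsU1 xK ltnn.
have xAK : x \in A :\: K by rewrite inE xK xA.
apply/bigcupP; case: (boolP [exists j in K, (j != i) && adj x j]).
  case/exists_inP => j jK /andP[ji xj]; exists (i, j); first by rewrite inE iK jK.
  by rewrite inE xAK xi xj eq_sym (negbTE ji).
rewrite negb_exists_in => /forall_inP only_i; exists (i, i); first by rewrite inE iK.
rewrite inE xAK xi eqxx /=; apply/forall_inP => k kK; apply/implyP => xk.
by move: (only_i k kK); rewrite xk andbT negbK.
Qed.

Lemma cell_diag_complete i : i \in K -> {in cell i i &, forall x y, x != y -> adj x y}.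
Proof.
move=> iK x y; rewrite !inE eqxx /= => /and4P[/andP[xK xA] xi _ /forall_inP x_only].
move=> /and4P[/andP[yK yA] yi _ /forall_inP y_only] xy; apply: contraT => nxy.
have off_i z : (forall k, k \in K -> adj z k ==> (k == i)) ->
    forall k, k \in K :\ i -> ~~ adj z k.
  by move=> z_only k; rewrite !inE => /andP[ki kK]; apply: contraNN ki => /(implyP (z_only k kK)).
have st : stable_set (x |: (y |: K :\ i)).
  apply: stable_setU1 => //; last first.
    by move=> k /setU1P[->|]; [exact: nxy | apply: off_i].
  exact: stable_setU1 (stable_setS (subD1set K i) K_stable) yA (off_i _ y_only).
have := K_max st; rewrite !cardsU1 (cardsD1 i K) iK !inE.
by rewrite (negbTE xy) (negbTE xK) (negbTE yK) !andbF ltnn.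
Qed.

Lemma cell_offdiag_complete i j : i \in K -> j \in K -> i != j ->
  {in cell i j &, forall x y, x != y -> adj x y}.
Proof.
move=> iK jK ij x y; rewrite !inE => /and4P[/andP[xK xA] xi xj _].
move=> /and4P[/andP[yK yA] yi yj _] xy.
have /stable_setP[KA stK] := K_stable.
have neqK z k : z \notin K -> k \in K -> z != k by move=> zK kK; apply: contraNneq zK => ->.
have [iA jA] : i \in A /\ j \in A by split; apply: (subsetP KA).
have u : uniq [:: x; i; y; j].
  rewrite /= !inE !negb_or xy (neqK _ _ xK iK) (neqK _ _ xK jK) ij andbT /=.
  by rewrite eq_sym (neqK _ _ yK iK) (neqK _ _ yK jK).
have := C4free xA iA yA jA u xi _ yj _; rewrite (negbTE (stK _ _ iK jK ij)) orbF.
by apply; rewrite adjC.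
Qed.

End MaximumStableSet.

Lemma card_C4free_le M :
  (forall S : {set T}, S \subset A -> {in S &, forall x y, x != y -> ~~ adj x y} -> #|S| <= M) ->
  (forall S : {set T}, S \subset A -> {in S &, forall x y, x != y -> adj x y} -> #|S| <= M) ->
  #|A| <= M + M ^ 3.
Proof.
move=> stableM completeM.
have st0 : stable_set set0 by apply/stable_setP; split=> [|x]; rewrite ?sub0set ?inE.
have [K K_stable K_max] := @arg_maxnP _ set0 stable_set (fun S => #|S|) st0.
have KM : #|K| <= M by have /stable_setP[] := K_stable; apply: stableM.
have cellM p : p \in setX K K -> #|cell K p.1 p.2| <= M.
  case: p => i j; rewrite inE => /andP[iK jK]; apply: completeM; first exact: cell_subset.
  case: (eqVneq i j) => [<-|ij]; first exact: cell_diag_complete.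
  exact: cell_offdiag_complete.
have bigcupM : #|\bigcup_(p in setX K K) cell K p.1 p.2| <= #|K| * #|K| * M.
  apply: leq_trans (leq_card_bigcup _ _) _.
  by rewrite -cardsX -sum_nat_const; apply: leq_sum.
apply: leq_trans (subset_leq_card (cells_cover K_stable K_max)) _.
rewrite cardsU; apply: leq_trans (leq_subr _ _) _; apply: leq_add => //.
apply: leq_trans bigcupM _; rewrite !expnS expn0 muln1 mulnA.
exact: leq_mul (leq_mul KM KM) (leqnn M).
Qed.

End C4FreeGraph.

Definition cliqueb n (E : {set {set 'I_n}}) (S : {set 'I_n}) :=
  [forall e : {set 'I_n}, (e \subset S) ==> (#|e| == 3) ==> (e \in E)].

Lemma cliqueP n (E : {set {set 'I_n}}) S : reflect (clique 3 E S) (cliqueb E S).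
Proof.
apply: (iffP forallP) => cl e; first by move=> eS e3; move: (cl e); rewrite eS e3.
by apply/implyP => eS; apply/implyP => /eqP; apply: cl.
Qed.

Lemma exists_clique_cube_bound n (E : {set {set 'I_n}}) : 0 < n ->
  uniform 3 E -> mf_free E 4 0 -> mf_free E 4 3 ->
  exists S, clique 3 E S /\ n <= 1 + #|S| + #|S| ^ 3.
Proof.
move=> n0 E3 no40 no43; pose v : 'I_n := Ordinal n0.
have cl0 : cliqueb E set0 by apply/cliqueP => e; rewrite subset0 => /eqP ->; rewrite cards0.
have [S S_clique S_max] := @arg_maxnP _ set0 (cliqueb E) (fun S => #|S|) cl0.
exists S; split; first exact/cliqueP.
have notv (X : {set 'I_n}) : X \subset [set~ v] -> v \notin X.
  by move=> XA; apply/negP => /(subsetP XA); rewrite !inE eqxx.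
have C4 a b c d : a \in [set~ v] -> b \in [set~ v] -> c \in [set~ v] -> d \in [set~ v] ->
    uniq [:: a; b; c; d] -> link E v a b -> link E v b c -> link E v c d -> link E v d a ->
    link E v a c || link E v b d.
  move=> aA bA cA dA u; apply: (link_C4free E3 no40 no43).
  by rewrite cons_uniq u andbT !inE !negb_or ![v == _]eq_sym -!in_setC1 aA bA cA dA.
have := card_C4free_le (linkC E v) C4 (M := #|S|).
rewrite cardsC1 card_ord -addnA add1n -ltnS prednK //; apply.
- move=> X XA st; apply: S_max; apply/cliqueP.
  exact: link_stable_clique E3 no40 _ _ (notv _ XA) st.
- move=> X XA cp; apply: S_max; apply/cliqueP.
  exact: link_complete_clique E3 no43 _ _ (notv _ XA) cp.
Qed.

Lemma half_cube_root_lt (x m : R) :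
  (6 <= x)%R -> (0 <= m)%R -> (x <= 1 + m + m ^ 3)%R -> (1 / 2 * Rpower x (1 / 3) < m)%R.
Proof.
move=> x6 m0 xm; have y0 : (0 < Rpower x (1 / 3))%R by apply: exp_pos.
have y3 : (Rpower x (1 / 3) ^ 3 = x)%R.
  rewrite -Rpower_pow // Rpower_mult.
  have -> : (1 / 3 * INR 3 = 1)%R by rewrite /=; field.
  by rewrite Rpower_1 //; lra.
move: y0 y3; set y := Rpower x (1 / 3) => y0 y3.
apply: Rnot_le_lt => my.
have m3 : (m ^ 3 <= (1 / 2 * y) ^ 3)%R by apply: pow_incr; lra.
rewrite /= in m3 y3 *; nra.
Qed.

Theorem mainTheorem5 :
  exists c1 : R, (0 < c1)%R /\
    forall (n : nat), 5 < n ->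
    forall E : {set {set 'I_n}},
      uniform 3 E -> Q_free E [:: (4, 0); (4, 3)] ->
      exists S : {set 'I_n}, homogeneous 3 E S /\
        (c1 * Rpower (INR n) (1 / 3) < INR #|S|)%R.
Proof.
exists (1 / 2)%R; split; first lra.
move=> n n5 E E3 Qfree.
have [S [S_clique S_bound]] :=
  exists_clique_cube_bound (leq_ltn_trans (leq0n 5) n5) E3 (Qfree (4, 0) isT) (Qfree (4, 3) isT).
exists S; split; first by left.
apply: half_cube_root_lt.
- by have /= := le_INR _ _ (elimT leP n5); lra.
- exact: pos_INR.
- have := le_INR _ _ (elimT leP S_bound).
  by rewrite !expnS expn0 muln1 !plus_INR !mult_INR /=; lra.
Qed.
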